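(* Consider the infinite-dimensional Poisson manifold with coordinates $p_1,p_2,p_3,\dots,u_1,u_2,u_3,\dots$ and Poisson bracket satisfying $\{p_i,p_k\}=0$, $\{u_i,u_k\}=0$, $\{u_i,p_k\}=J_{ki}$ ($i,k\ge1$), where $J_{ki}$ are functions of the coordinates. Let $p^*_n=P_n(-p_1,-\tfrac12p_2,-\tfrac13p_3,\dots)$ for $n\ge1$, where the Schur polynomials $P_n$ are defined by $\exp\big(\sum_{n\ge1}z^nt_n\big)=\sum_{m\ge0}z^mP_m(t_1,t_2,\dots)$, and let $J^*_{ki}:=\{u_i,p^*_k\}$ denote the Poisson tensor in the coordinates $(p^*,u)$. Let $I(\Gamma_\infty)$ be the ideal generated by $h^*_n=p^*_n-u_{n-1}$, $n=2,3,4,\dots$ (the family of ideals of the family of normal rational curves of the big cell). If $$\big(J^*_{i,k-1}-J^*_{k,i-1}\big)\big|_{\Gamma_\infty}=0\qquad\text{for all } i,k=2,3,4,\dots,$$ i.e. these functions lie in $I(\Gamma_\infty)$, then $I(\Gamma_\infty)$ is a Poisson ideal: $\{I(\Gamma_\infty),I(\Gamma_\infty)\}\subset I(\Gamma_\infty)$.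
   Context: Here $p_1,p_2,\dots$ play the role of the elements $p_i=z^i+\sum_{k\ge1}H^i_kz^{-k}$ of a point of the big cell closed under multiplication, $u_k=H^1_k$, and the family of normal rational curves is given by the relations $p_2=p_1^2-2u_1$, $p_3=p_1^3-3u_1p_1-3u_2$, $\dots$, which are equivalent to $p^*_n=u_{n-1}$, $n\ge2$; $\Gamma_\infty$ denotes this family (zero set of the ideal). A Poisson ideal is an ideal closed under the Poisson bracket. *)

From HB Require Import structures.
From mathcomp Require Import all_boot all_order all_algebra.
Set Implicit Arguments. Unset Strict Implicit. Unset Printing Implicit Defensive.
Import Order.TTheory GRing.Theory Num.Theory.
Local Open Scope ring_scope.

Definition poisson_bracket (A : comAlgType rat) (br : A -> A -> A) : Prop :=
  [/\ (forall (a : rat) (x y z : A), br (a *: x + y) z = a *: br x z + br y z),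
      (forall x y : A, br x y = - br y x),
      (forall x y z : A, br x (y * z) = br x y * z + y * br x z) &
      (forall x y z : A, br x (br y z) + br y (br z x) + br z (br x y) = 0)].

(* Schur polynomials: P_m(t_1,t_2,...) is the coefficient of z^m in
   exp(sum_{n>=1} z^n t_n).  Since the exponent has no constant term, only
   t_1..t_m and the terms of the exponential series up to order m contribute. *)
Definition schur (A : comAlgType rat) (m : nat) (t : nat -> A) : A :=
  let T : {poly A} := \sum_(1 <= n < m.+1) t n *: 'X^n in
  \sum_(k < m.+1) ((k`!)%:R : rat)^-1 *: (T ^+ k)`_m.

Definition pstar (A : comAlgType rat) (p : nat -> A) (n : nat) : A :=
  schur n (fun j => - ((j%:R : rat)^-1 *: p j)).

Definition in_ideal_gen (A : comAlgType rat) (g : nat -> A) (P : pred nat)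
    (x : A) : Prop :=
  exists s : seq (A * nat),
    all (fun q => P q.2) s /\ x = \sum_(q <- s) q.1 * g q.2.

Definition I_Gamma (A : comAlgType rat) (p u : nat -> A) : A -> Prop :=
  in_ideal_gen (fun n => pstar p n - u n.-1) (fun n => 1 < n)%N.

From mathcomp Require Import all_boot all_order all_algebra.
Import GRing.Theory.
Local Open Scope ring_scope.
Set Implicit Arguments.

(* An ideal generated by a family is closed under a Poisson bracket as soon as
   the brackets of the generators lie in it: by the Leibniz rule, the bracket
   of two combinations sum a_n g_n and sum b_m g_m is a combination of the
   g_n, g_m and of the {g_n, g_m}.  For the generators h*_n = p*_n - u_{n-1},
   the brackets {p*_n, p*_m} and {u_i, u_k} vanish, because p*_n is a
   polynomial in the pairwise commuting p_j; what remains of {h*_n, h*_m} is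
   exactly J*_{n,m-1} - J*_{m,n-1}, which lies in the ideal by hypothesis. *)

Section BracketLaws.
Variables (A : comAlgType rat) (br : A -> A -> A).
Hypothesis br_poisson : poisson_bracket br.

Lemma bracketZDl (a : rat) (x y z : A) :
  br (a *: x + y) z = a *: br x z + br y z.
Proof. by case: br_poisson. Qed.

Lemma bracketC (x y : A) : br x y = - br y x.
Proof. by case: br_poisson. Qed.

Lemma bracketMr (x y z : A) : br x (y * z) = br x y * z + y * br x z.
Proof. by case: br_poisson. Qed.

Lemma bracketDl (x y z : A) : br (x + y) z = br x z + br y z.
Proof. by rewrite -[x]scale1r bracketZDl !scale1r. Qed.

Lemma bracket0l (z : A) : br 0 z = 0.
Proof. by apply/(addrI (br 0 z)); rewrite -bracketDl !addr0. Qed.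

Lemma bracketNl (x z : A) : br (- x) z = - br x z.
Proof. by rewrite -[- x]addr0 -scaleN1r bracketZDl bracket0l addr0 scaleN1r. Qed.

Lemma bracketDr (x y z : A) : br x (y + z) = br x y + br x z.
Proof. by rewrite bracketC bracketDl opprD -!bracketC. Qed.

Lemma bracketNr (x y : A) : br x (- y) = - br x y.
Proof. by rewrite bracketC bracketNl opprK -bracketC. Qed.

Lemma bracketMl (x y z : A) : br (x * y) z = br x z * y + x * br y z.
Proof.
by rewrite bracketC bracketMr (bracketC z x) (bracketC z y) mulNr mulrN opprD !opprK.
Qed.

End BracketLaws.

Section IdealGen.
Variables (A : comAlgType rat) (g : nat -> A) (P : pred nat).
Local Notation I := (in_ideal_gen g P).

Lemma in_ideal_gen0 : I 0.
Proof. by exists [::]; rewrite big_nil. Qed.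

Lemma in_ideal_genD (x y : A) : I x -> I y -> I (x + y).
Proof.
by move=> [s [Ps ->]] [t [Pt ->]]; exists (s ++ t); rewrite all_cat Ps Pt big_cat.
Qed.

Lemma in_ideal_genMl (a x : A) : I x -> I (a * x).
Proof.
move=> [s [Ps ->]]; exists [seq (a * q.1, q.2) | q <- s]; split.
  by rewrite all_map.
by rewrite big_map mulr_sumr; apply: eq_bigr => q _; rewrite mulrA.
Qed.

Lemma in_ideal_gen_mem (n : nat) : P n -> I (g n).
Proof. by move=> Pn; exists [:: (1, n)]; rewrite /= Pn big_seq1 mul1r. Qed.

Lemma in_ideal_gen_ind (Q : A -> Prop) :
  Q 0 -> (forall a n x, P n -> Q x -> Q (a * g n + x)) ->
  forall x, I x -> Q x.
Proof.
move=> Q0 QS x [s [+ ->]]; elim: s => [|[a n] s IHs] /=.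
  by rewrite big_nil.
by case/andP=> Pn Ps; rewrite big_cons; apply: QS => //; apply: IHs.
Qed.

Lemma in_ideal_gen_bracket (br : A -> A -> A) :
  poisson_bracket br ->
  (forall n m, P n -> P m -> I (br (g n) (g m))) ->
  forall x y, I x -> I y -> I (br x y).
Proof.
move=> hbr Igg.
have Igy : forall n y, P n -> I y -> I (br (g n) y).
  move=> n y Pn; move: y.
  apply: (in_ideal_gen_ind (fun y => I (br (g n) y))) => [|a m y' Pm Iy'].
    by rewrite bracketC // bracket0l // oppr0; apply: in_ideal_gen0.
  rewrite bracketDr // bracketMr //; apply: in_ideal_genD => //.
  apply: in_ideal_genD; last exact/in_ideal_genMl/Igg.
  exact/in_ideal_genMl/in_ideal_gen_mem.
move=> x y + Iy; move: x.
apply: (in_ideal_gen_ind (fun x => I (br x y))) => [|a n x' Pn Ix'].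
  by rewrite bracket0l //; apply: in_ideal_gen0.
rewrite bracketDl // bracketMl //; apply: in_ideal_genD => //.
apply: in_ideal_genD; last exact/in_ideal_genMl/Igy.
exact/in_ideal_genMl/in_ideal_gen_mem.
Qed.

End IdealGen.

Section SchurSubalgebra.
Variables (A : comAlgType rat) (Z : A -> Prop).
Hypotheses (Z1 : Z 1)
  (ZZD : forall (a : rat) x y, Z x -> Z y -> Z (a *: x + y))
  (ZM : forall x y, Z x -> Z y -> Z (x * y)).

Let Z0 : Z 0.
Proof. by have := ZZD (-1) Z1 Z1; rewrite scaleN1r addNr. Qed.

Let ZD x y : Z x -> Z y -> Z (x + y).
Proof. by move=> Zx Zy; rewrite -[x]scale1r; apply: ZZD. Qed.

Let ZZ (a : rat) x : Z x -> Z (a *: x).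
Proof. by move=> Zx; rewrite -[_ *: x]addr0; apply: ZZD. Qed.

Let Znat (b : bool) : Z b%:R.
Proof. by case: b; rewrite ?mulr1n ?mulr0n. Qed.

Lemma schur_closed (t : nat -> A) (m : nat) :
  (forall j, (1 <= j)%N -> Z (t j)) -> Z (schur m t).
Proof.
move=> Zt; rewrite /schur; set T := (\sum_(1 <= n < m.+1) _).
have ZT i : Z T`_i.
  rewrite /T coef_sum big_nat_cond; apply: big_ind => // n.
  by case/andP=> /andP[n_gt0 _] _; rewrite coefZ coefXn; apply/ZM/Znat/Zt.
have ZTk k i : Z (T ^+ k)`_i.
  elim: k i => [|k IHk] i; first by rewrite expr0 coef1; apply: Znat.
  by rewrite exprS coefM; apply: big_ind => // j _; apply: ZM.
by apply: big_ind => // k _; apply: ZZ.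
Qed.

Lemma pstar_closed (p : nat -> A) (n : nat) :
  (forall j, (1 <= j)%N -> Z (p j)) -> Z (pstar p n).
Proof.
move=> Zp; apply: schur_closed => j j_gt0.
by rewrite -scaleNr -[_ *: p j]addr0; apply/ZZD/Z0/Zp.
Qed.

End SchurSubalgebra.

Section PstarBracket.
Variables (A : comAlgType rat) (br : A -> A -> A) (p : nat -> A).
Hypothesis br_poisson : poisson_bracket br.

Lemma bracket_pstar_eq0 (z : A) (n : nat) :
  (forall j, (1 <= j)%N -> br (p j) z = 0) -> br (pstar p n) z = 0.
Proof.
move=> pz; apply: (@pstar_closed A (fun x => br x z = 0)) => //.
- have := bracketMl br_poisson 1 1 z; rewrite !mulr1 mul1r => br1.
  by apply/(addrI (br 1 z)); rewrite addr0 -br1.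
- by move=> a x y xz yz; rewrite bracketZDl // xz yz scaler0 addr0.
- by move=> x y xz yz; rewrite bracketMl // xz yz mul0r mulr0 addr0.
Qed.

Lemma bracket_pstar_pstar (n m : nat) :
  (forall i k, (1 <= i)%N -> (1 <= k)%N -> br (p i) (p k) = 0) ->
  br (pstar p n) (pstar p m) = 0.
Proof.
move=> pp; apply: bracket_pstar_eq0 => j j_gt0.
rewrite bracketC // bracket_pstar_eq0 ?oppr0 // => i i_gt0.
by rewrite bracketC // pp // oppr0.
Qed.

End PstarBracket.

Theorem proposition5 (A : comAlgType rat) (br : A -> A -> A) (p u : nat -> A) :
  poisson_bracket br ->
  (forall i k : nat, (1 <= i)%N -> (1 <= k)%N -> br (p i) (p k) = 0) ->
  (forall i k : nat, (1 <= i)%N -> (1 <= k)%N -> br (u i) (u k) = 0) ->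
  (* J^*_{ki} := {u_i, p^*_k};  J^*_{i,k-1} - J^*_{k,i-1} in I(Gamma_infty) *)
  (forall i k : nat, (2 <= i)%N -> (2 <= k)%N ->
     I_Gamma p u (br (u k.-1) (pstar p i) - br (u i.-1) (pstar p k))) ->
  forall x y : A, I_Gamma p u x -> I_Gamma p u y -> I_Gamma p u (br x y).
Proof.
move=> hbr pp uu hJ; apply: in_ideal_gen_bracket => // n m n_gt1 m_gt1.
have -> : br (pstar p n - u n.-1) (pstar p m - u m.-1) =
          br (u m.-1) (pstar p n) - br (u n.-1) (pstar p m).
  rewrite !(bracketDl hbr, bracketDr hbr, bracketNl hbr, bracketNr hbr).
  rewrite bracket_pstar_pstar // uu ?ltn_predRL // oppr0 subr0 sub0r.
  by rewrite (bracketC hbr (pstar p n)) opprK.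
exact: hJ.
Qed.
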